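(* Let $p$ be a prime, $\mu\ge1$, $m=p^\mu$, and $n>1$. Let $A=(a_{ij})$ be a random symmetric $n\times n$ matrix over $\mathbf{Z}_m$, conditioned on $a_{11}\not\equiv 0\pmod p$. Then there is an $n\times n$ matrix $U$ (depending on $A$) such that $$UAU^T\equiv\begin{pmatrix} a_{11} & 0\\ 0 & A'\end{pmatrix}\pmod{p^\mu},$$ where the $1\times(n-1)$ and $(n-1)\times1$ off-diagonal blocks are zero and $A'$ is a random symmetric $(n-1)\times(n-1)$ matrix over $\mathbf{Z}_m$ (i.e. under the stated conditional distribution of $A$, $A'$ reduced mod $m$ is uniformly distributed over symmetric $(n-1)\times(n-1)$ matrices over $\mathbf{Z}_m$).
   Context: For a positive integer $m$, $\mathbf{Z}_m=\{1,2,\ldots,m\}$ (viewed as residues mod $m$). A random symmetric $n\times n$ matrix over $\mathbf{Z}_m$ is one whose entries $a_{ij}$, $i\le j$, are chosen independently and uniformly from $\mathbf{Z}_m$, with $a_{ji}=a_{ij}$. *)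

From mathcomp Require Import all_boot all_algebra.
Set Implicit Arguments. Unset Strict Implicit. Unset Printing Implicit Defensive.
Import GRing.Theory.
Local Open Scope ring_scope.

Definition symmx (R : nzRingType) (n : nat) (A : 'M[R]_n) : bool := A^T == A.

Definition cond_set (p mu k : nat) : {set 'M['Z_(p ^ mu)]_(1 + k)} :=
  [set A | symmx A && ~~ (p %| (A ord0 ord0 : 'Z_(p ^ mu)))%N].

From mathcomp Require Import all_boot all_algebra.
Set Implicit Arguments. Unset Strict Implicit. Unset Printing Implicit Defensive.
Import GRing.Theory.
Local Open Scope ring_scope.

(* Write A = [[a, x^T], [x, A1]] with a = A 0 0 a unit. Row-reducing with
   U = [[1, 0], [-a^-1 x, 1]] gives U A U^T = diag(a, A1 - a^-1 x x^T), and the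
   Schur complement A1 - a^-1 x x^T depends on A1 only through a translation.
   Hence translating the lower-right block of A by a symmetric B maps the
   conditioning set onto itself and the fibre of the Schur complement over 0
   bijectively onto its fibre over B: all fibres have the same size, i.e. A'
   is uniformly distributed. *)

Section SchurComplement.

Variables (R : comUnitRingType) (k : nat).
Implicit Types (A : 'M[R]_(1 + k)) (B : 'M[R]_k).

Definition schur_elim A : 'M[R]_(1 + k) :=
  block_mx 1%:M 0 (- ((A ord0 ord0)^-1 *: dlsubmx A)) 1%:M.

Definition schur_compl A : 'M[R]_k :=
  drsubmx A - (A ord0 ord0)^-1 *: (dlsubmx A *m ursubmx A).

Definition corner_mx B : 'M[R]_(1 + k) := block_mx 0 0 0 B.

Lemma ulsubmx_pivot A : ulsubmx A = (A ord0 ord0)%:M.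
Proof.
rewrite [LHS]mx11_scalar !mxE.
by have -> : lshift k 0 = ord0 :> 'I_(1 + k) by apply/val_inj.
Qed.

Lemma schur_elimP A :
  symmx A -> A ord0 ord0 \is a GRing.unit ->
  schur_elim A *m A *m (schur_elim A)^T =
    block_mx (A ord0 ord0)%:M 0 0 (schur_compl A).
Proof.
rewrite /symmx => /eqP sA a_unit; set a := A ord0 ord0.
have urA : ursubmx A = (dlsubmx A)^T by rewrite -{1}sA trmx_dlsub.
rewrite /schur_elim /schur_compl -[A in _ *m A *m _]submxK ulsubmx_pivot -/a urA.
rewrite tr_block_mx !trmx0 !trmx1 !mulmx_block.
rewrite !mul0mx !mulmx0 !mul1mx !mulmx1 ?addr0 ?add0r.
have elim_col : - (a^-1 *: dlsubmx A) *m a%:M + dlsubmx A = 0.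
  by rewrite mul_mx_scalar scalerN scalerA (mulrV a_unit) scale1r addNr.
have elim_row : a%:M *m (- (a^-1 *: dlsubmx A))^T + (dlsubmx A)^T = 0.
  by rewrite mul_scalar_mx linearN /= linearZ /= scalerN scalerA (mulrV a_unit)
             scale1r addNr.
by rewrite elim_col elim_row mul0mx add0r mulNmx -scalemxAl addrC.
Qed.

Lemma submx_add_corner A B :
  [/\ ulsubmx (A + corner_mx B) = ulsubmx A,
      ursubmx (A + corner_mx B) = ursubmx A,
      dlsubmx (A + corner_mx B) = dlsubmx A &
      drsubmx (A + corner_mx B) = drsubmx A + B].
Proof.
rewrite /corner_mx -[A in A + _]submxK add_block_mx !addr0.
by rewrite block_mxKul block_mxKur block_mxKdl block_mxKdr.
Qed.

Lemma pivot_add_corner A B : (A + corner_mx B) ord0 ord0 = A ord0 ord0.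
Proof.
have [ulAB _ _ _] := submx_add_corner A B.
by move/(congr1 (fun M : 'M_1 => M 0 0)): ulAB; rewrite !ulsubmx_pivot !mxE.
Qed.

Lemma schur_compl_add_corner A B :
  schur_compl (A + corner_mx B) = schur_compl A + B.
Proof.
rewrite /schur_compl pivot_add_corner.
by have [_ -> -> ->] := submx_add_corner A B; rewrite addrAC.
Qed.

Lemma symmx_add_corner A B :
  symmx B -> symmx (A + corner_mx B) = symmx A.
Proof.
rewrite /symmx => /eqP sB; rewrite linearD /= tr_block_mx !trmx0 sB.
by rewrite (inj_eq (addIr _)).
Qed.

End SchurComplement.

Lemma unit_Zp_pexp (p mu a : nat) :
  prime p -> (0 < mu)%N -> ~~ (p %| a)%N -> (a%:R : 'Z_(p ^ mu)) \is a GRing.unit.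
Proof.
move=> p_pr mu_gt0 p_ndvd_a.
have pmu_gt1 : (1 < p ^ mu)%N by rewrite -(expn0 p) ltn_exp2l ?prime_gt1.
by rewrite unitZpE // coprime_pexpl // prime_coprime.
Qed.

Lemma cond_set_add_corner (p mu k : nat) (A : 'M['Z_(p ^ mu)]_(1 + k)) B :
  symmx B -> (A + corner_mx B \in cond_set p mu k) = (A \in cond_set p mu k).
Proof. by move=> sB; rewrite !inE symmx_add_corner // pivot_add_corner. Qed.

Lemma schur_fibre_translate (p mu k : nat) (B : 'M['Z_(p ^ mu)]_k) :
  symmx B ->
  [set A in cond_set p mu k | schur_compl A == B] =
    (+%R^~ (corner_mx B)) @: [set A in cond_set p mu k | schur_compl A == 0].
Proof.
move=> sB; apply/setP => A; rewrite inE; apply/andP/imsetP => [[condA /eqP schurA]|].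
  have sNB : symmx (- B) by rewrite /symmx linearN /= (eqP sB).
  exists (A + corner_mx (- B)).
    by rewrite inE cond_set_add_corner // condA schur_compl_add_corner schurA subrr /=.
  by rewrite -addrA /corner_mx add_block_mx !addr0 addNr block_mx0 addr0.
move=> [A0]; rewrite inE => /andP [condA0 /eqP A0_0] ->.
by rewrite cond_set_add_corner // schur_compl_add_corner A0_0 add0r.
Qed.

Theorem lemma2p1 (p mu k : nat) (hp : prime p) (hmu : (1 <= mu)%N) (hk : (1 <= k)%N) :
  exists (U : 'M['Z_(p ^ mu)]_(1 + k) -> 'M['Z_(p ^ mu)]_(1 + k))
         (A' : 'M['Z_(p ^ mu)]_(1 + k) -> 'M['Z_(p ^ mu)]_k),
    (forall A, A \in cond_set p mu k ->
       U A *m A *m (U A)^T = block_mx (A ord0 ord0)%:M 0 0 (A' A)) /\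
    (exists c : nat, forall B : 'M['Z_(p ^ mu)]_k, symmx B ->
       #|[set A in cond_set p mu k | A' A == B]| = c).
Proof.
exists (@schur_elim _ k), (@schur_compl _ k); split.
  move=> A; rewrite inE => /andP [sA pivot_ndvd]; apply: schur_elimP => //.
  by rewrite -[A ord0 ord0]natr_Zp unit_Zp_pexp.
exists #|[set A in cond_set p mu k | schur_compl A == 0]| => B sB.
by rewrite (schur_fibre_translate sB) card_imset //; apply: addIr.
Qed.
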